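(* For every integer $n \geqslant 3$, the line graph $L(W_{n+1})$ of the wheel $W_{n+1}$ is not representable.
   Context: All graphs are finite and simple. For a word $W$ over an alphabet, two distinct letters $x,y$ alternate in $W$ if both occur in $W$ and, after erasing all other letters from $W$, one obtains a word of the form $xyxy\ldots$ or $yxyx\ldots$ (an alternating word of any length). A graph $G=(V,E)$ is representable if there exists a word $W$ over the alphabet $V$ in which every vertex occurs, such that for all distinct $x,y\in V$, the letters $x$ and $y$ alternate in $W$ if and only if $(x,y)\in E$. The wheel $W_m$ is the graph obtained from the cycle $C_m$ on $m$ vertices by adding one new vertex adjacent to all vertices of the cycle. The line graph $L(G)$ of a graph $G$ has the edges of $G$ as vertices, two of them being adjacent in $L(G)$ iff they share an endpoint in $G$. *)

From mathcomp Require Import all_boot all_order.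
Set Implicit Arguments. Unset Strict Implicit. Unset Printing Implicit Defensive.

(* A simple graph is a symmetric irreflexive relation e : rel V on a finType V. *)

Definition alt_word (T : Type) (x y : T) (k : nat) : seq T :=
  mkseq (fun i => if odd i then y else x) k.

Definition alternate (V : eqType) (w : seq V) (x y : V) : bool :=
  [&& x \in w, y \in w &
    let s := filter (fun z => (z == x) || (z == y)) w in
    (s == alt_word x y (size s)) || (s == alt_word y x (size s))].

Definition representable (V : finType) (e : rel V) : Prop :=
  exists w : seq V, (forall v : V, v \in w) /\
    (forall x y : V, x != y -> (alternate w x y <-> e x y)).

Definition cycle_rel (m : nat) : rel 'I_m :=
  fun i j => (i != j) &&
    ((val j == (val i).+1 %% m) || (val i == (val j).+1 %% m)).

(* Wheel W_m on option 'I_m: None is the hub, Some i are the cycle vertices. *)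
Definition wheel_rel (m : nat) : rel (option 'I_m) :=
  fun x y => match x, y with
             | None, None => false
             | None, Some _ | Some _, None => true
             | Some i, Some j => cycle_rel i j
             end.

Definition is_edge (V : finType) (e : rel V) (E : {set V}) : bool :=
  [exists x, exists y, e x y && (E == [set x; y])].

Definition line_rel (V : finType) (e : rel V) : rel {E : {set V} | is_edge e E} :=
  fun E F => (E != F) && (val E :&: val F != set0).

(* Order the letters of a word by x <= y iff every prefix contains at least as many
   y's as x's.  Two alternating letters are comparable, and a letter squeezed between two
   alternating letters alternates with both of them.  So a representable graph carries a
   partial order in which the ends of every edge are comparable and every vertex between
   them is adjacent to both.

   In the line graph of the wheel W_m, m >= 4, the spokes form a clique, hence a chain,
   while the rim edge r_i only meets the spokes s_i, s_(i+1) and the rim edges r_(i-1),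
   r_(i+1).  If every r_i lies above both or below both of its spokes, the spokes are
   monotone all the way around the cycle, which is absurd.  Otherwise some r_i lies between
   its spokes, which are then the largest and the smallest spoke, and all other spokes
   increase from one to the other.  Each other rim edge then lies above or below r_i
   according to the side of its own spokes, and either a rim edge far from r_i ends up
   between r_i and a neighbour of r_i, or r_i ends up between two consecutive rim edges
   one of which is far from it. *)

From mathcomp Require Import all_boot all_order zify zmodp.

Record alternation_order (L : Type) (adj le : L -> L -> Prop) : Prop := {
  alt_refl : forall x, le x x;
  alt_trans : forall x y z, le x y -> le y z -> le x z;
  alt_anti : forall x y, le x y -> le y x -> x = y;
  adj_sym : forall x y, adj x y -> adj y x;
  adj_comparable : forall x y, adj x y -> le x y \/ le y x;
  adj_between : forall x y z, le z y -> le y x -> adj x z -> y <> x -> y <> z ->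
    adj x y /\ adj y z }.

Arguments alternation_order {L}.
Arguments alt_refl {L adj le} _ x.
Arguments alt_trans {L adj le} _ {x y z} _ _.
Arguments alt_anti {L adj le} _ {x y} _ _.
Arguments adj_sym {L adj le} _ {x y} _.
Arguments adj_comparable {L adj le} _ {x y} _.
Arguments adj_between {L adj le} _ {x y z} _ _ _ _ _.

Lemma alternation_order_dual {L : Type} {adj le : L -> L -> Prop} :
  alternation_order adj le -> alternation_order adj (fun x y => le y x).
Proof.
case=> refl trans anti sym comp betw; split=> //.
- by move=> x y z hxy hyz; apply: trans hyz hxy.
- by move=> x y hxy hyx; apply: anti hyx hxy.
- by move=> x y /comp [];[right|left].
- move=> x y z hyz hxy /sym hzx nyx nyz.
  by have [/sym ? /sym ?] := betw z y x hxy hyz hzx nyz nyx.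
Qed.

Section WordOrder.

Variable T : eqType.

Lemma alt_word_cons (x y : T) k : alt_word x y k.+1 = x :: alt_word y x k.
Proof.
apply: (@eq_from_nth _ x); first by rewrite /alt_word /= size_map size_iota size_mkseq.
move=> i; rewrite /alt_word size_mkseq => hi.
rewrite nth_mkseq //; case: i hi => [|i] hi //=.
by rewrite nth_mkseq //; case: (odd i).
Qed.

(* [x] and [y] alternate in [w] starting with [x] iff every prefix of [w] contains
   as many [x] as [y], or one more. *)
Definition alt_prefix_counts (w : seq T) (x y : T) :=
  forall p, count_mem y (take p w) <= count_mem x (take p w) <= count_mem y (take p w) + 1.

Lemma filter_alt_wordP (w : seq T) (x y : T) : x != y ->
  (filter (fun z => (z == x) || (z == y)) w ==
     alt_word x y (size (filter (fun z => (z == x) || (z == y)) w)))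
  <-> alt_prefix_counts w x y.
Proof.
elim: w x y => [|z w IH] x y nxy; first by split=> // _ p; rewrite take_nil.
have filterC : filter (fun z => (z == y) || (z == x)) w =
               filter (fun z => (z == x) || (z == y)) w.
  by apply: eq_filter => v; rewrite orbC.
case: (eqVneq z x) => [->|zx].
  rewrite /= eqxx /= alt_word_cons eqseq_cons eqxx /= -filterC (IH y x); last by rewrite eq_sym.
  split=> h.
    by case=> [|p] //=; rewrite (negbTE nxy) eqxx /=; have := h p; lia.
  by move=> p; have := h p.+1; rewrite /= (negbTE nxy) eqxx /=; lia.
case: (eqVneq z y) => [->|zy].
  rewrite /= eqxx orbT alt_word_cons eqseq_cons eq_sym (negbTE nxy) /=.
  by split=> // h; have := h 1; rewrite /= eqxx eq_sym (negbTE nxy) /= take0 /=; lia.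
rewrite /= (negbTE zx) (negbTE zy) /= IH //.
split=> h; last by move=> p; have := h p.+1; rewrite /= (negbTE zx) (negbTE zy).
by case=> [|p] //=; rewrite (negbTE zx) (negbTE zy) /=; apply: h.
Qed.

Lemma alternate_prefix_counts (w : seq T) (x y : T) : x != y ->
  alternate w x y <->
  [/\ x \in w, y \in w & alt_prefix_counts w x y \/ alt_prefix_counts w y x].
Proof.
move=> nxy; rewrite /alternate.
have nyx : y != x by rewrite eq_sym.
have filterC : filter (fun z => (z == y) || (z == x)) w =
               filter (fun z => (z == x) || (z == y)) w.
  by apply: eq_filter => v; rewrite orbC.
split.
  case/and3P=> hx hy /orP [h|h]; split=> //; first by left; apply/(filter_alt_wordP _ _ _ nxy).
  by right; apply/(filter_alt_wordP _ _ _ nyx); rewrite filterC.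
case=> hx hy [h|h]; rewrite hx hy /=; apply/orP; first by left; apply/(filter_alt_wordP _ _ _ nxy).
by right; rewrite -filterC; apply/(filter_alt_wordP _ _ _ nyx).
Qed.

Definition prefix_le (w : seq T) (x y : T) :=
  forall p, count_mem x (take p w) <= count_mem y (take p w).

Lemma prefix_le_anti (w : seq T) x y : x \in w -> prefix_le w x y -> prefix_le w y x -> x = y.
Proof.
move=> xw hxy hyx; case: (eqVneq x y) => // nxy; exfalso.
have ltx : index x w < size w by rewrite index_mem.
have := hxy (index x w).+1; have := hyx (index x w).+1.
have := hxy (index x w); have := hyx (index x w).
rewrite (take_nth x ltx) nth_index // -!cats1 !count_cat /= eqxx (negbTE nxy) /=; lia.
Qed.

Lemma prefix_le_alternation_order (w : seq T) (e : rel T) :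
  (forall v, v \in w) -> (forall x y, x != y -> (alternate w x y <-> e x y)) ->
  (forall x, ~~ e x x) -> (forall x y, e x y -> e y x) ->
  alternation_order e (prefix_le w).
Proof.
move=> allw repr irr sym.
have e_neq x y : e x y -> x != y by apply: contraTneq => ->; apply: irr.
have anti x y : prefix_le w x y -> prefix_le w y x -> x = y := prefix_le_anti _ _ _ (allw x).
split.
- by move=> x p.
- by move=> x y z hxy hyz p; apply: leq_trans (hxy p) (hyz p).
- exact: anti.
- exact: sym.
- move=> x y exy; have nxy := e_neq _ _ exy.
  have /(alternate_prefix_counts _ _ _ nxy) [_ _ [h|h]] : alternate w x y by apply/repr.
  + by right => p; have := h p; lia.
  + by left => p; have := h p; lia.
- move=> x y z hzy hyx exz nyx nyz.
  have nxz := e_neq _ _ exz.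
  have /(alternate_prefix_counts _ _ _ nxz) [_ _ [h|h]] : alternate w x z by apply/repr.
  + have nxy : x != y by rewrite eq_sym; apply/eqP.
    have {}nyz : y != z by apply/eqP.
    split.
    * apply/(repr _ _ nxy)/(alternate_prefix_counts _ _ _ nxy); split => //; left => p.
      by have := h p; have := hzy p; have := hyx p; lia.
    * apply/(repr _ _ nyz)/(alternate_prefix_counts _ _ _ nyz); split => //; left => p.
      by have := h p; have := hzy p; have := hyx p; lia.
  + have hxz : prefix_le w x z by move=> p; have := h p; lia.
    have hzx : prefix_le w z x by move=> p; apply: leq_trans (hzy p) (hyx p).
    by move: exz; rewrite (anti _ _ hxz hzx) (negbTE (irr z)).
Qed.

End WordOrder.

Section AlternationOrder.

Context {L : Type} {adj le : L -> L -> Prop} (ord : alternation_order adj le).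

Lemma adj_betweenl {x y z} : le z y -> le y x -> adj x z -> y <> x -> y <> z -> adj x y.
Proof. by move=> hzy hyx hxz nyx nyz; case: (adj_between ord hzy hyx hxz nyx nyz). Qed.

Lemma adj_betweenr {x y z} : le z y -> le y x -> adj x z -> y <> x -> y <> z -> adj y z.
Proof. by move=> hzy hyx hxz nyx nyz; case: (adj_between ord hzy hyx hxz nyx nyz). Qed.

End AlternationOrder.

Lemma modn_addl_neq m a b i : a < m -> b < m -> a != b -> (a + i) %% m != (b + i) %% m.
Proof. by move=> ltam ltbm neqab; rewrite !(addnC _ i) eqn_modDl !modn_small. Qed.

Lemma modn_neqS {m} i : 2 < m -> i %% m != i.+1 %% m.
Proof. by move=> m_gt2; apply: (@modn_addl_neq m 0 1); lia. Qed.

Lemma modn_neqSS {m} i : 2 < m -> i %% m != i.+2 %% m.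
Proof. by move=> m_gt2; apply: (@modn_addl_neq m 0 2); lia. Qed.

Ltac modn_neq := solve
  [ apply: modn_neqS; lia | apply: modn_neqSS; lia
  | rewrite eq_sym; first [ apply: modn_neqS; lia | apply: modn_neqSS; lia ] ].

(* [s i] is the spoke {hub, i} and [r i] the rim edge {i, i+1} of the wheel, indices
   taken mod [m]. *)
Record wheel_lines (L : Type) (adj : L -> L -> Prop) (m : nat) (s r : nat -> L) : Prop := {
  spoke_mod : forall i, s i = s (i %% m);
  rim_mod : forall i, r i = r (i %% m);
  adj_spokes : forall i j, i %% m != j %% m -> adj (s i) (s j);
  adj_spoke_rim : forall i, adj (s i) (r i);
  adj_spokeS_rim : forall i, adj (s i.+1) (r i);
  nadj_spoke_rim : forall i j, j %% m != i %% m -> j %% m != i.+1 %% m -> ~ adj (s j) (r i);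
  adj_rims : forall i, adj (r i) (r i.+1);
  nadj_rims : forall i j, j %% m != i.+1 %% m -> i %% m != j.+1 %% m -> ~ adj (r i) (r j);
  spoke_neq_rim : forall i j, s i <> r j;
  spoke_inj : forall i j, s i = s j -> i %% m = j %% m;
  rim_inj : forall i j, r i = r j -> i %% m = j %% m }.

Arguments wheel_lines {L}.
Arguments spoke_mod {L adj m s r} _ i.
Arguments rim_mod {L adj m s r} _ i.
Arguments adj_spokes {L adj m s r} _ i j _.
Arguments adj_spoke_rim {L adj m s r} _ i.
Arguments adj_spokeS_rim {L adj m s r} _ i.
Arguments nadj_spoke_rim {L adj m s r} _ i j _ _.
Arguments adj_rims {L adj m s r} _ i.
Arguments nadj_rims {L adj m s r} _ i j _ _.
Arguments spoke_neq_rim {L adj m s r} _ {i j}.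
Arguments spoke_inj {L adj m s r} _ i j _.
Arguments rim_inj {L adj m s r} _ i j _.

Lemma wheel_lines_shift {L : Type} {adj : L -> L -> Prop} {m : nat} {s r : nat -> L} t :
  wheel_lines adj m s r -> wheel_lines adj m (fun i => s (t + i)) (fun i => r (t + i)).
Proof.
case=> smod rmod ss sr srS nsr rr nrr snr sinj rinj; split => //.
- by move=> i; rewrite smod [in RHS]smod modnDmr.
- by move=> i; rewrite rmod [in RHS]rmod modnDmr.
- by move=> i j nij; apply: ss; rewrite eqn_modDl.
- by move=> i; rewrite addnS.
- by move=> i j h1 h2; apply: nsr; rewrite -?addnS eqn_modDl.
- by move=> i; rewrite addnS.
- by move=> i j h1 h2; apply: nrr; rewrite -?addnS eqn_modDl.
- by move=> i j /sinj/eqP; rewrite eqn_modDl => /eqP.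
- by move=> i j /rinj/eqP; rewrite eqn_modDl => /eqP.
Qed.

Definition rim_above {L : Type} (le : L -> L -> Prop) (s r : nat -> L) i :=
  le (s i) (r i) /\ le (s i.+1) (r i).
Definition rim_below {L : Type} (le : L -> L -> Prop) (s r : nat -> L) i :=
  le (r i) (s i) /\ le (r i) (s i.+1).
Definition rim_outside {L : Type} (le : L -> L -> Prop) (s r : nat -> L) i :=
  rim_above le s r i \/ rim_below le s r i.
Definition rim_descends {L : Type} (le : L -> L -> Prop) (s r : nat -> L) i :=
  le (s i.+1) (r i) /\ le (r i) (s i).
Definition rim_ascends {L : Type} (le : L -> L -> Prop) (s r : nat -> L) i :=
  le (s i) (r i) /\ le (r i) (s i.+1).

Section WheelOrder.

Context {L : Type} {adj le : L -> L -> Prop} {m : nat} {s r : nat -> L}.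
Hypotheses (ord : alternation_order adj le) (W : wheel_lines adj m s r) (m_gt3 : 3 < m).

Local Notation above := (rim_above le s r).
Local Notation below := (rim_below le s r).
Local Notation outside := (rim_outside le s r).

Lemma spoke_neq {i j} : i %% m != j %% m -> s i <> s j.
Proof. by move=> nij /(spoke_inj W)/eqP; rewrite (negbTE nij). Qed.

Lemma rim_neq {i j} : i %% m != j %% m -> r i <> r j.
Proof. by move=> nij /(rim_inj W)/eqP; rewrite (negbTE nij). Qed.

Lemma rim_neq_spoke {i j} : r i <> s j.
Proof. by move=> /esym; exact: (spoke_neq_rim W). Qed.

Lemma nadj_rim_spoke i j : j %% m != i %% m -> j %% m != i.+1 %% m -> ~ adj (r i) (s j).
Proof. by move=> h1 h2 /(adj_sym ord); exact: (nadj_spoke_rim W i j h1 h2). Qed.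

Lemma spoke_le_anti j k : j < m -> k < m -> le (s j) (s k) -> le (s k) (s j) -> j = k.
Proof.
by move=> jm km hjk hkj; have := spoke_inj W _ _ (alt_anti ord hjk hkj); rewrite !modn_small.
Qed.

Lemma rim_cases i : outside i \/ rim_descends le s r i \/ rim_ascends le s r i.
Proof.
case: (adj_comparable ord (adj_spoke_rim W i)) => h1;
  case: (adj_comparable ord (adj_spokeS_rim W i)) => h2.
- by left; left.
- by right; right.
- by right; left.
- by left; right.
Qed.

Ltac wheel_neq := solve
  [ exact (spoke_neq_rim W) | exact rim_neq_spoke
  | apply: spoke_neq; modn_neq | apply: rim_neq; modn_neq ].

Lemma no_spoke_peak i : le (s i) (s i.+1) -> le (s i.+2) (s i.+1) ->
  outside i -> outside i.+1 -> False.
Proof.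
move=> s01 s21 [[a1 a2]|[b1 b2]] [[c1 c2]|[d1 d2]].
- case: (adj_comparable ord (adj_rims W i)) => h.
  + have : adj (r i) (s i.+2).
      by apply: (adj_betweenr ord (alt_trans ord s21 a2) h (adj_sym ord (adj_spokeS_rim W _)));
        wheel_neq.
    by apply: nadj_rim_spoke; modn_neq.
  + have : adj (r i.+1) (s i).
      by apply: (adj_betweenr ord (alt_trans ord s01 c1) h (adj_sym ord (adj_spoke_rim W _)));
        wheel_neq.
    by apply: nadj_rim_spoke; modn_neq.
- have : adj (s i.+2) (r i).
    apply: (adj_sym ord); apply: (adj_betweenl ord d2 (alt_trans ord s21 a2) (adj_rims W _));
      wheel_neq.
  by apply: (nadj_spoke_rim W); modn_neq.
- have : adj (s i) (r i.+1).
    apply: (adj_sym ord).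
    by apply: (adj_betweenl ord b1 (alt_trans ord s01 c1) (adj_sym ord (adj_rims W _))); wheel_neq.
  by apply: (nadj_spoke_rim W); modn_neq.
- case: (adj_comparable ord (adj_rims W i)) => h.
  + have : adj (s i.+2) (r i).
      by apply: (adj_betweenr ord (alt_trans ord h d2) s21 (adj_spokeS_rim W _)); wheel_neq.
    by apply: (nadj_spoke_rim W); modn_neq.
  + have : adj (s i) (r i.+1).
      by apply: (adj_betweenr ord (alt_trans ord h b1) s01 (adj_spoke_rim W _)); wheel_neq.
    by apply: (nadj_spoke_rim W); modn_neq.
Qed.

Lemma spokes_increaseS i : outside i -> outside i.+1 ->
  le (s i) (s i.+1) -> le (s i.+1) (s i.+2).
Proof.
move=> out0 out1 s01.
case: (adj_comparable ord (adj_spokes W i.+1 i.+2 _)) => //; first by modn_neq.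
by move=> s21; case: (no_spoke_peak i s01 s21 out0 out1).
Qed.

(* Going once around the cycle would give s 1 <= s m = s 0 <= s 1. *)
Lemma spokes_not_increasing : (forall i, outside i) -> ~ le (s 0) (s 1).
Proof.
move=> out s01.
have up k : le (s k) (s k.+1).
  by elim: k => [//|k IH]; apply: (spokes_increaseS k (out _) (out _) IH).
have up1 k : le (s 1) (s k.+1).
  by elim: k => [|k IH]; [exact: (alt_refl ord) | exact: (alt_trans ord IH (up _))].
have := up1 m.-1; rewrite prednK ?(spoke_mod W m) ?modnn; last lia.
move=> /(alt_anti ord s01); apply: spoke_neq; modn_neq.
Qed.

Lemma rim_between_top i a b : (a = i /\ b = i.+1) \/ (a = i.+1 /\ b = i) ->
  le (s b) (r i) -> le (r i) (s a) -> forall j, le (s j) (s a).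
Proof.
move=> hab hbr hra j.
case: (eqVneq (j %% m) (a %% m)) => ja.
  by rewrite (spoke_mod W j) ja -(spoke_mod W a); apply: (alt_refl ord).
case: (eqVneq (j %% m) (b %% m)) => jb.
  by rewrite (spoke_mod W j) jb -(spoke_mod W b); exact: (alt_trans ord hbr hra).
case: (adj_comparable ord (adj_spokes W _ _ ja)) => // haj; exfalso.
have : adj (s j) (r i).
  by apply: (adj_betweenl ord hbr (alt_trans ord hra haj) (adj_spokes W _ _ jb)); wheel_neq.
by case: hab => -[ea eb]; subst a b; apply: (nadj_spoke_rim W).
Qed.

Lemma below_above_false i : le (s i) (s i.+1) -> below i -> above i.+1 -> False.
Proof.
move=> s01 [b1 b2] [c1 c2].
have : adj (s i) (r i.+1).
  apply: (adj_sym ord).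
  by apply: (adj_betweenl ord b1 (alt_trans ord s01 c1) (adj_sym ord (adj_rims W _))); wheel_neq.
by apply: (nadj_spoke_rim W); modn_neq.
Qed.

Lemma below_rims_increase i : le (s i) (s i.+1) -> below i -> below i.+1 ->
  le (r i) (r i.+1).
Proof.
move=> s01 [b1 b2] [d1 d2].
case: (adj_comparable ord (adj_rims W i)) => // h; exfalso.
have : adj (s i) (r i.+1).
  by apply: (adj_betweenr ord (alt_trans ord h b1) s01 (adj_spoke_rim W _)); wheel_neq.
by apply: (nadj_spoke_rim W); modn_neq.
Qed.

Lemma above_rims_increase i : le (s i.+1) (s i.+2) -> above i -> above i.+1 ->
  le (r i) (r i.+1).
Proof.
move=> s12 [a1 a2] [c1 c2].
case: (adj_comparable ord (adj_rims W i)) => // h; exfalso.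
have : adj (s i.+2) (r i).
  apply: (adj_sym ord).
  by apply: (adj_betweenl ord s12 (alt_trans ord c2 h) (adj_sym ord (adj_spokeS_rim W _)));
    wheel_neq.
by apply: (nadj_spoke_rim W); modn_neq.
Qed.

End WheelOrder.

Section DualOrder.

Context {L : Type} {adj le : L -> L -> Prop} {m : nat} {s r : nat -> L}.
Hypotheses (ord : alternation_order adj le) (W : wheel_lines adj m s r) (m_gt3 : 3 < m).

Local Notation ord' := (alternation_order_dual ord).

Lemma rim_descends_extremes i : rim_descends le s r i ->
  (forall j, le (s j) (s i)) /\ (forall j, le (s i.+1) (s j)).
Proof.
case=> hb ha; split.
  exact: (rim_between_top ord W i i i.+1 (or_introl (conj erefl erefl)) hb ha).
exact: (rim_between_top ord' W i i.+1 i (or_intror (conj erefl erefl)) ha hb).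
Qed.

Lemma rim_ascends_extremes i : rim_ascends le s r i ->
  (forall j, le (s j) (s i.+1)) /\ (forall j, le (s i) (s j)).
Proof.
case=> hb ha; split.
  exact: (rim_between_top ord W i i.+1 i (or_intror (conj erefl erefl)) hb ha).
exact: (rim_between_top ord' W i i i.+1 (or_introl (conj erefl erefl)) ha hb).
Qed.

Lemma all_rims_outside_false : (forall i, rim_outside le s r i) -> False.
Proof.
move=> out; have : 0 %% m != 1 %% m by modn_neq.
move=> /(adj_spokes W) /(adj_comparable ord) [s01|s10].
  exact: (spokes_not_increasing ord W m_gt3 out s01).
apply: (spokes_not_increasing ord' W m_gt3 _ s10) => i.
by case: (out i); [right|left].
Qed.

End DualOrder.

Section DescendingRim.

Context {L : Type} {adj le : L -> L -> Prop} {m : nat} {s r : nat -> L}.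
Hypotheses (ord : alternation_order adj le) (W : wheel_lines adj m s r) (m_gt3 : 3 < m).
Hypothesis desc : rim_descends le s r m.-1.

Local Notation R := (r m.-1).
Local Notation above := (rim_above le s r).
Local Notation below := (rim_below le s r).
Local Notation outside := (rim_outside le s r).

Lemma spoke_wrap : s m.-1.+1 = s 0.
Proof. by rewrite prednK ?(spoke_mod W m) ?modnn //; lia. Qed.

Lemma spoke0_le_last_rim : le (s 0) R.
Proof. by rewrite -spoke_wrap; case: desc. Qed.

Lemma adj_spoke0_last_rim : adj (s 0) R.
Proof. by rewrite -spoke_wrap; apply: (adj_spokeS_rim W). Qed.

Lemma adj_last_rim_rim0 : adj R (r 0).
Proof. by have := adj_rims W m.-1; rewrite prednK ?(rim_mod W m) ?modnn //; lia. Qed.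

Lemma adj_rim_last_rim : adj (r (m - 2)) R.
Proof. by have := adj_rims W (m - 2); rewrite (_ : (m - 2).+1 = m.-1) //; lia. Qed.

Lemma nadj_spoke_last_rim j : 0 < j < m.-1 -> ~ adj (s j) R.
Proof. by move=> hj; apply: (nadj_spoke_rim W); rewrite ?prednK ?modnn ?modn_small; lia. Qed.

Lemma nadj_rim_last_rim j : 0 < j < m - 2 -> ~ adj (r j) R.
Proof. by move=> hj; apply: (nadj_rims W); rewrite ?prednK ?modnn ?modn_small; lia. Qed.

Lemma spoke_le_last j : le (s j) (s m.-1).
Proof. exact: (rim_descends_extremes ord W _ desc).1. Qed.

Lemma spoke0_le j : le (s 0) (s j).
Proof. by rewrite -spoke_wrap; apply: (rim_descends_extremes ord W _ desc).2. Qed.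

Lemma rims_outside_before_last j : j <= m - 2 -> outside j.
Proof.
move=> hj; case: (rim_cases ord W j) => [//|[dj|aj]].
- have [top _] := rim_descends_extremes ord W _ dj.
  have : j = m.-1 by apply: (spoke_le_anti ord W _ _ _ _ (spoke_le_last j) (top _)); lia.
  lia.
- have [top bot] := rim_ascends_extremes ord W _ aj.
  have j0 : j = 0 by apply: (spoke_le_anti ord W _ _ _ _ (bot 0) (spoke0_le j)); lia.
  subst j; have : 1 = m.-1.
    by apply: (spoke_le_anti ord W _ _ _ _ (spoke_le_last 1) (top _)); lia.
  lia.
Qed.

Lemma spokes_increasing j : j.+1 <= m.-1 -> le (s j) (s j.+1).
Proof.
elim: j => [_|j IH hj]; first exact: spoke0_le.
apply: (spokes_increaseS ord W m_gt3 j (rims_outside_before_last j _)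
  (rims_outside_before_last j.+1 _) (IH _)); lia.
Qed.

Lemma last_rim_le_above j : j <= m - 2 -> above j -> le R (r j).
Proof.
elim: j => [_|j IH hj] aj.
  case: (adj_comparable ord adj_last_rim_rim0) => // h; exfalso.
  have : adj (s 1) R.
    apply: (adj_sym ord).
    apply: (adj_betweenl ord (spokes_increasing 0 _) (alt_trans ord aj.2 h)
      (adj_sym ord adj_spoke0_last_rim)); first lia.
    - exact (spoke_neq_rim W).
    - by apply (spoke_neq W); modn_neq.
  by apply: nadj_spoke_last_rim; lia.
case: (rims_outside_before_last j _) => [|aj0|bj0]; first lia.
  apply: (alt_trans ord (IH ltac:(lia) aj0)).
  by apply: (above_rims_increase ord W m_gt3 j (spokes_increasing j.+1 _) aj0 aj); lia.
by case: (below_above_false ord W m_gt3 j (spokes_increasing j _) bj0 aj); lia.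
Qed.

Lemma below_le_last_rim j : j <= m - 2 -> below j -> le (r j) R.
Proof.
move=> hj; have [k jk] : exists k, j + k = m - 2 by exists (m - 2 - j); lia.
elim: k j jk {hj} => [|k IH] j jk bj.
  rewrite addn0 in jk; subst j.
  case: (adj_comparable ord adj_rim_last_rim) => // h; exfalso.
  have : adj (s (m - 2)) R.
    apply: (adj_betweenl ord spoke0_le_last_rim (alt_trans ord h bj.1)).
    - by apply: (adj_spokes W (m - 2) 0); rewrite !modn_small; lia.
    - exact (rim_neq_spoke W).
    - exact (rim_neq_spoke W).
  by apply: nadj_spoke_last_rim; lia.
case: (rims_outside_before_last j.+1 _) => [|aj1|bj1]; first lia.
  by case: (below_above_false ord W m_gt3 j (spokes_increasing j _) bj aj1); lia.
have rjS : le (r j) (r j.+1).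
  by apply: (below_rims_increase ord W m_gt3 j (spokes_increasing j _) bj bj1); lia.
by apply: (alt_trans ord rjS); apply: IH bj1; lia.
Qed.

Lemma above_below_switch j : j <= m - 2 -> above 0 -> below j ->
  exists2 a, a < j & above a /\ below a.+1.
Proof.
elim: j => [_ a0 b0|j IH hj a0 bj].
  by case: (spoke_neq_rim W (alt_anti ord a0.1 b0.1)).
case: (rims_outside_before_last j _) => [|aj|bj0]; first lia.
  by exists j.
have [|a ltaj hab] := IH _ a0 bj0; first lia.
by exists a => //; lia.
Qed.

Lemma above_last_false : above (m - 2) -> False.
Proof.
have m2 : m - 2 = (m - 3).+1 by lia.
rewrite m2 => alast.
case: (rims_outside_before_last (m - 3) _) => [|a3|b3]; first lia.
  have Rr3 : le R (r (m - 3)) by apply: last_rim_le_above a3; lia.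
  have r3r2 : le (r (m - 3)) (r (m - 3).+1).
    by apply: (above_rims_increase ord W m_gt3 _ _ a3 alast); apply: spokes_increasing; lia.
  have : adj (r (m - 3)) R.
    apply: (adj_betweenr ord Rr3 r3r2); first by rewrite -m2; exact: adj_rim_last_rim.
    - by apply (rim_neq W); rewrite !modn_small; lia.
    - by apply (rim_neq W); rewrite !modn_small; lia.
  by apply: nadj_rim_last_rim; lia.
by case: (below_above_false ord W m_gt3 _ (spokes_increasing _ _) b3 alast); lia.
Qed.

Lemma above_first_below_last_false : above 0 -> below (m - 2) -> False.
Proof.
move=> a0 blast.
have [a lta [aa ba]] := above_below_switch (m - 2) (leqnn _) a0 blast.
have last_neq k : k < m.-1 -> R <> r k.
  by move=> ltk; apply (rim_neq W); rewrite !modn_small; lia.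
have ltam : a.+1 <= m - 2 by [].
have [ha ha1] : adj (r a) R /\ adj R (r a.+1).
  apply: (adj_between ord (below_le_last_rim a.+1 ltam ba) (last_rim_le_above a (ltnW ltam) aa));
    [exact: (adj_rims W a) | apply: last_neq; lia ..].
case: (posnP a) => [a_eq0|a_gt0].
  by subst a; apply: (nadj_rim_last_rim 1 _ (adj_sym ord ha1)); lia.
by apply: (nadj_rim_last_rim a _ ha); lia.
Qed.

Lemma below_first_false : below 0 -> False.
Proof.
move=> b0.
case: (rims_outside_before_last 1 _) => [|a1|b1]; first lia.
  by case: (below_above_false ord W m_gt3 0 (spokes_increasing 0 _) b0 a1); lia.
have r0r1 := below_rims_increase ord W m_gt3 0 (spokes_increasing 0 ltac:(lia)) b0 b1.
have : adj R (r 1).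
  apply: (adj_betweenl ord r0r1 (below_le_last_rim 1 ltac:(lia) b1) adj_last_rim_rim0).
  - by apply (rim_neq W); rewrite !modn_small; lia.
  - by apply (rim_neq W); rewrite !modn_small; lia.
by move=> /(adj_sym ord); apply: nadj_rim_last_rim; lia.
Qed.

Lemma rim_descends_last_false : False.
Proof.
case: (rims_outside_before_last 0 _) => [|a0|]; [lia| |exact: below_first_false].
case: (rims_outside_before_last (m - 2) _) => [|alast|blast]; first lia.
  exact: above_last_false.
exact: (above_first_below_last_false a0 blast).
Qed.

End DescendingRim.

Lemma rim_descends_false {L : Type} {adj le : L -> L -> Prop} {m : nat} {s r : nat -> L} :
  alternation_order adj le -> wheel_lines adj m s r -> 3 < m ->
  forall k, rim_descends le s r k -> False.
Proof.
move=> ord W m_gt3 k desc.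
apply: (rim_descends_last_false ord (wheel_lines_shift k.+1 W) m_gt3).
have spoke_period j : s (j + m) = s j by rewrite (spoke_mod W) modnDr -(spoke_mod W).
have rim_period j : r (j + m) = r j by rewrite (rim_mod W) modnDr -(rim_mod W).
rewrite /rim_descends /= addnS (_ : k.+1 + m.-1 = k + m); last by lia.
by rewrite -addSn !spoke_period rim_period.
Qed.

Theorem wheel_lines_no_alternation_order {L : Type} {adj le : L -> L -> Prop} {m : nat}
    {s r : nat -> L} :
  alternation_order adj le -> wheel_lines adj m s r -> 3 < m -> False.
Proof.
move=> ord W m_gt3; apply: (all_rims_outside_false ord W m_gt3) => i.
case: (rim_cases ord W i) => [//|[di|[ai1 ai2]]]; exfalso.
- exact: (rim_descends_false ord W m_gt3 _ di).
- exact: (rim_descends_false (alternation_order_dual ord) W m_gt3 _ (conj ai2 ai1)).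
Qed.

Lemma line_rel_irr (V : finType) (e : rel V) E : ~~ @line_rel V e E E.
Proof. by rewrite /line_rel eqxx. Qed.

Lemma line_rel_sym (V : finType) (e : rel V) E F : @line_rel V e E F -> line_rel F E.
Proof. by rewrite /line_rel eq_sym setIC. Qed.

Section WheelLineGraph.

Variable n : nat.
Hypothesis n_gt1 : 1 < n.

Local Notation V := (option 'I_n.+1).
Local Notation line := (@line_rel _ (@wheel_rel n.+1)).

Definition wheel_edge := {E : {set V} | is_edge (@wheel_rel n.+1) E}.

Definition spoke_set i : {set V} := [set None; Some (inZp i)].
Definition rim_set i : {set V} := [set Some (inZp i); Some (inZp i.+1)].

Lemma inZpS_neq i : (inZp i != inZp i.+1 :> 'I_n.+1).
Proof. by apply: modn_neqS; lia. Qed.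

Lemma spoke_set_edge i : is_edge (@wheel_rel n.+1) (spoke_set i).
Proof. by apply/existsP; exists None; apply/existsP; exists (Some (inZp i)); rewrite eqxx. Qed.

Lemma rim_set_edge i : is_edge (@wheel_rel n.+1) (rim_set i).
Proof.
apply/existsP; exists (Some (inZp i)); apply/existsP; exists (Some (inZp i.+1)).
by rewrite eqxx andbT /= /cycle_rel inZpS_neq /= -[(i %% _).+1]addn1 modnDml addn1 eqxx.
Qed.

Definition spoke i : wheel_edge := exist _ (spoke_set i) (spoke_set_edge i).
Definition rim i : wheel_edge := exist _ (rim_set i) (rim_set_edge i).

Lemma inZp_modn i : (inZp (i %% n.+1) : 'I_n.+1) = inZp i.
Proof. by apply: val_inj; rewrite /= modn_mod. Qed.

Lemma inZpS_modn i : (inZp (i %% n.+1).+1 : 'I_n.+1) = inZp i.+1.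
Proof. by apply: val_inj; rewrite /= -addn1 modnDml addn1. Qed.

Lemma spoke_modn i : spoke i = spoke (i %% n.+1).
Proof. by apply: val_inj; rewrite /= /spoke_set inZp_modn. Qed.

Lemma rim_modn i : rim i = rim (i %% n.+1).
Proof. by apply: val_inj; rewrite /= /rim_set inZp_modn inZpS_modn. Qed.

Lemma line_relI (E F : wheel_edge) v u :
  v \in val E -> v \in val F -> u \in val E -> u \notin val F -> line E F.
Proof.
move=> vE vF uE uF; apply/andP; split; first by apply/eqP => EF; move: uF; rewrite -EF uE.
by apply/set0Pn; exists v; rewrite inE vE vF.
Qed.

Lemma line_relP (E F : wheel_edge) : line E F -> E <> F /\ exists2 v, v \in val E & v \in val F.
Proof.
by case/andP => /eqP neqEF /set0Pn [v]; rewrite inE => /andP [vE vF]; split => //; exists v.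
Qed.

Lemma wheel_lines_line_graph : wheel_lines line n.+1 spoke rim.
Proof.
have inZp_eq i j : (inZp i == inZp j :> 'I_n.+1) = (i %% n.+1 == j %% n.+1) by [].
have Some_eq (a b : 'I_n.+1) : (Some a == Some b) = (a == b) by [].
have m_gt2 : 2 < n.+1 by lia.
split.
- exact: spoke_modn.
- exact: rim_modn.
- by move=> i j nij; apply: (line_relI _ _ None (Some (inZp i))); rewrite !inE /=.
- by move=> i; apply: (line_relI _ _ (Some (inZp i)) None); rewrite !inE ?eqxx ?orbT /=.
- by move=> i; apply: (line_relI _ _ (Some (inZp i.+1)) None); rewrite !inE ?eqxx ?orbT /=.
- move=> i j ji jiS /line_relP [_ [v]]; rewrite /= !inE => /orP [/eqP ->|/eqP ->] //.
  by rewrite !Some_eq !inZp_eq (negbTE ji) (negbTE jiS).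
- move=> i; apply: (line_relI _ _ (Some (inZp i.+1)) (Some (inZp i))); rewrite !inE ?eqxx ?orbT //.
  by rewrite !Some_eq !inZp_eq negb_or modn_neqS // modn_neqSS.
- move=> i j jiS ijS /line_relP [neq [v]]; rewrite /= !inE.
  move=> /orP [] /eqP -> /orP []; rewrite !Some_eq !inZp_eq => /eqP eij.
  + by apply: neq; rewrite rim_modn eij -rim_modn.
  + by move: ijS; rewrite eij eqxx.
  + by move: jiS; rewrite -eij eqxx.
  + move/eqP: eij; rewrite -addn1 -[j.+1]addn1 eqn_modDr => /eqP eij.
    by apply: neq; rewrite rim_modn eij -rim_modn.
- by move=> i j /(congr1 val) /setP /(_ None); rewrite /= !inE eqxx.
- move=> i j /(congr1 val) /setP /(_ (Some (inZp i))).
  by rewrite /= !inE eqxx orbT Some_eq inZp_eq => /esym /eqP.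
- move=> i j /(congr1 val) /setP rij.
  have := rij (Some (inZp i)); have := rij (Some (inZp j)).
  rewrite /= !inE !Some_eq !eqxx /= !inZp_eq.
  move=> /orP [/eqP -> //|/eqP jiS] /esym /orP [/eqP //|/eqP ijS].
  have : i.+2 %% n.+1 = i %% n.+1.
    by rewrite -addn1 -modnDml -jiS modnDml addn1 ijS.
  by move/eqP; rewrite eq_sym (negbTE (modn_neqSS _ _)).
Qed.

End WheelLineGraph.

Theorem theorem2 (n : nat) (hn : 3 <= n) :
  ~ representable (@line_rel _ (@wheel_rel n.+1)).
Proof.
case=> w [allw repr].
have ord := prefix_le_alternation_order _ w _ allw repr (@line_rel_irr _ _) (@line_rel_sym _ _).
apply: (wheel_lines_no_alternation_order ord (wheel_lines_line_graph n _)); lia.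
Qed.
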